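(* Let $\Omega\subset\mathbb{R}^2$ be open, $\lambda>0$, and let $u\in L^2(\Omega)$ satisfy $-\Delta u=\lambda u$ in $\Omega$. Let $\mathbf{x}_0\in\Omega$, $h>0$, and let $\mathbf{e}^-,\mathbf{e}^+$ be unit vectors with angle $\alpha\pi$ from $\mathbf{e}^-$ to $\mathbf{e}^+$, where $\alpha\in(0,2)$ is irrational; put $\Gamma^\pm=\{\mathbf{x}_0+t\mathbf{e}^\pm:0\le t\le h\}\subset\Omega$. Suppose $\Gamma^-$ and $\Gamma^+$ are generalized singular lines of $u$ with constant parameters $\eta_1\equiv C_1$ and $\eta_2\equiv C_2$ respectively. Then $\mathrm{Vani}(u;\mathbf{x}_0)=0$ if $u(\mathbf{x}_0)\neq0$, and $\mathrm{Vani}(u;\mathbf{x}_0)=+\infty$ if $u(\mathbf{x}_0)=0$.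
   Context: No boundary condition is imposed on $\partial\Omega$; $u$ is real-analytic in $\Omega$. A generalized singular line with parameter $\eta$ (not identically zero; here a nonzero complex constant) is a segment $\Gamma$ on which $\partial_\nu u+\eta u=0$, $\nu$ a unit normal to $\Gamma$. $\mathrm{Vani}(u;\mathbf{x}_0)$ is the smallest degree of a nonzero homogeneous term in the Taylor expansion of $u$ at $\mathbf{x}_0$ ($+\infty$ if all vanish). *)

From Stdlib Require Import Reals List Arith Factorial.
From Coquelicot Require Import Coquelicot.
Open Scope R_scope.

Definition Cfun := R -> R -> C.

Definition dx (f : Cfun) : Cfun := fun x y =>
  (Derive (fun t => fst (f t y)) x, Derive (fun t => snd (f t y)) x).
Definition dy (f : Cfun) : Cfun := fun x y =>
  (Derive (fun t => fst (f x t)) y, Derive (fun t => snd (f x t)) y).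

(* Iterated partial derivative along a word: true = d/dx, false = d/dy;
   the head of the list is applied last. *)
Fixpoint Dw (w : list bool) (f : Cfun) : Cfun :=
  match w with
  | nil => f
  | b :: w' => (if b then dx else dy) (Dw w' f)
  end.

Definition open2 (Om : R -> R -> Prop) : Prop :=
  forall x y, Om x y -> exists eps, 0 < eps /\
    forall x' y', (x' - x)^2 + (y' - y)^2 < eps^2 -> Om x' y'.

Definition smooth_on (Om : R -> R -> Prop) (f : Cfun) : Prop :=
  forall w x y, Om x y ->
    continuity_2d_pt (fun a b => fst (Dw w f a b)) x y /\
    continuity_2d_pt (fun a b => snd (Dw w f a b)) x y /\
    ex_derive (fun t => fst (Dw w f t y)) x /\
    ex_derive (fun t => snd (Dw w f t y)) x /\
    ex_derive (fun t => fst (Dw w f x t)) y /\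
    ex_derive (fun t => snd (Dw w f x t)) y.

Definition helmholtz_on (Om : R -> R -> Prop) (lam : R) (u : Cfun) : Prop :=
  forall x y, Om x y ->
    Cplus (dx (dx u) x y) (dy (dy u) x y) = Cmult (RtoC (- lam)) (u x y).

Definition ddir (nu : R * R) (u : Cfun) : Cfun := fun x y =>
  Cplus (Cmult (RtoC (fst nu)) (dx u x y)) (Cmult (RtoC (snd nu)) (dy u x y)).

Definition on_segment (x0 e : R * R) (h : R) (p : R * R) : Prop :=
  exists t, 0 <= t <= h /\ p = (fst x0 + t * fst e, snd x0 + t * snd e).

Definition gen_singular_line (u : Cfun) (x0 e : R * R) (h : R) (eta : C) : Prop :=
  exists nu : R * R,
    fst nu ^ 2 + snd nu ^ 2 = 1 /\ fst nu * fst e + snd nu * snd e = 0 /\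
    forall p, on_segment x0 e h p ->
      Cplus (ddir nu u (fst p) (snd p)) (Cmult eta (u (fst p) (snd p))) = RtoC 0.

Definition taylor_hom (u : Cfun) (x0 : R * R) (n : nat) (z1 z2 : R) : C :=
  sum_n (fun k =>
    Cmult (RtoC (/ (INR (fact k) * INR (fact (n - k))) * z1 ^ k * z2 ^ (n - k)))
          (Dw (repeat true k ++ repeat false (n - k)) u (fst x0) (snd x0))) n.

Definition hom_nonzero (u : Cfun) (x0 : R * R) (n : nat) : Prop :=
  exists z1 z2, taylor_hom u x0 n z1 z2 <> RtoC 0.

(* Vani(u; x0) = v, with v = Some n (a finite degree) or None (+infinity). *)
Definition Vani_is (u : Cfun) (x0 : R * R) (v : option nat) : Prop :=
  match v with
  | Some n => hom_nonzero u x0 n /\ forall m, (m < n)%nat -> ~ hom_nonzero u x0 m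
  | None => forall m, ~ hom_nonzero u x0 m
  end.

Definition irrational (a : R) : Prop :=
  ~ exists p q : Z, q <> 0%Z /\ a = IZR p / IZR q.

(** Let W = d/dy + i d/dx and Wbar = d/dy - i d/dx, and k(p,q) = W^p Wbar^q u (x0);
    these numbers determine every derivative of u at x0.  Since W Wbar is the Laplacian,
    the equation gives k(p+1,q+1) = -lam k(p,q), so once all k of order at most M vanish,
    only the pure coefficients A = k(M+1,0) and B = k(0,M+1) of order M+1 can survive.
    Differentiating  d_nu u + eta u = 0  M times along a singular line of direction
    exp(i phi) annihilates the eta-term, which has order at most M, and leaves
    exp(i(M+1)phi) X + exp(-i(M+1)phi) Y = 0 with X, Y nonzero multiples of A, B.
    For the two lines this 2x2 system has determinant a nonzero multiple of
    sin((M+1) alpha pi), which does not vanish because alpha is irrational; hence A = B = 0,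
    and induction from k(0,0) = u(x0) = 0 shows that u vanishes to infinite order. *)

From Stdlib Require Import Reals Lra Lia Psatz.
From Coquelicot Require Import Coquelicot.
Open Scope R_scope.

Definition lin (a : C) (F : Cfun) (b : C) (G : Cfun) : Cfun :=
  fun x y => (a * F x y + b * G x y)%C.

(** * Derivatives of complex-valued functions *)

Definition Cderive (f : R -> C) (t : R) : C :=
  (Derive (fun s => fst (f s)) t, Derive (fun s => snd (f s)) t).
Definition ex_Cderive (f : R -> C) (t : R) : Prop :=
  ex_derive (fun s => fst (f s)) t /\ ex_derive (fun s => snd (f s)) t.

Lemma Cderive_ext_loc (f g : R -> C) (t : R) :
  locally t (fun s => f s = g s) -> Cderive f t = Cderive g t.
Proof.
  intros H; unfold Cderive; f_equal; apply Derive_ext_loc;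
    (eapply filter_imp; [| exact H]); intros s ->; reflexivity.
Qed.

Lemma is_derive_lincomb (f1 f2 g1 g2 : R -> R) (c1 c2 d1 d2 t : R) :
  ex_derive f1 t -> ex_derive f2 t -> ex_derive g1 t -> ex_derive g2 t ->
  is_derive (fun s => c1 * f1 s + c2 * f2 s + (d1 * g1 s + d2 * g2 s)) t
    (c1 * Derive f1 t + c2 * Derive f2 t + (d1 * Derive g1 t + d2 * Derive g2 t)).
Proof. intros; auto_derive; auto; rewrite !Rmult_1_l; reflexivity. Qed.

Lemma Cderive_lin (a b : C) (f g : R -> C) (t : R) :
  ex_Cderive f t -> ex_Cderive g t ->
  ex_Cderive (fun s => a * f s + b * g s)%C t /\
  Cderive (fun s => a * f s + b * g s)%C t = (a * Cderive f t + b * Cderive g t)%C.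
Proof.
  intros [Hf1 Hf2] [Hg1 Hg2].
  pose proof (fun c1 c2 d1 d2 => is_derive_lincomb _ _ _ _ c1 c2 d1 d2 t Hf1 Hf2 Hg1 Hg2) as L.
  destruct a as [a1 a2], b as [b1 b2].
  assert (Re := L a1 (- a2) b1 (- b2)); assert (Im := L a2 a1 b2 b1).
  apply (is_derive_ext _ (fun s => fst ((a1, a2) * f s + (b1, b2) * g s)%C))
    in Re; [| intros; simpl; ring].
  apply (is_derive_ext _ (fun s => snd ((a1, a2) * f s + (b1, b2) * g s)%C))
    in Im; [| intros; simpl; ring].
  split; [split; eexists; eassumption |].
  apply is_derive_unique in Re, Im.
  unfold Cderive; apply injective_projections; cbn [fst snd];
    [etransitivity; [exact Re|] | etransitivity; [exact Im|]]; simpl; ring.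
Qed.

Lemma dxE (F : Cfun) x y : dx F x y = Cderive (fun t => F t y) x.
Proof. reflexivity. Qed.

Lemma dyE (F : Cfun) x y : dy F x y = Cderive (fun t => F x t) y.
Proof. reflexivity. Qed.

(** * Smooth functions on an open set *)

Section OpenSet.

Variable Om : R -> R -> Prop.
Hypothesis HO : open2 Om.

Lemma open2_locally_2d (P : R -> R -> Prop) x y :
  (forall u v, Om u v -> P u v) -> Om x y -> locally_2d P x y.
Proof.
  intros HP Hxy; destruct (HO x y Hxy) as [eps [Heps Hball]].
  assert (Hd : 0 < eps / 2) by lra.
  exists (mkposreal _ Hd); simpl; intros u v Hu Hv; apply HP, Hball.
  apply Rabs_def2 in Hu; apply Rabs_def2 in Hv; nra.
Qed.

Lemma open2_locally_fst (P : R -> R -> Prop) x y :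
  (forall u v, Om u v -> P u v) -> Om x y -> locally x (fun t => P t y).
Proof. intros; apply locally_2d_1d_const_y, open2_locally_2d; auto. Qed.

Lemma open2_locally_snd (P : R -> R -> Prop) x y :
  (forall u v, Om u v -> P u v) -> Om x y -> locally y (fun t => P x t).
Proof. intros; apply locally_2d_1d_const_x, open2_locally_2d; auto. Qed.

End OpenSet.

Lemma Dw_app w1 w2 F : Dw (w1 ++ w2) F = Dw w1 (Dw w2 F).
Proof. induction w1 as [|b w1 IH]; simpl; congruence. Qed.

Lemma smooth_Dw Om w F : smooth_on Om F -> smooth_on Om (Dw w F).
Proof. intros HF w' x y Hxy; rewrite <- Dw_app; apply HF, Hxy. Qed.

Definition regular_at (F : Cfun) (x y : R) : Prop :=
  continuity_2d_pt (fun a b => fst (F a b)) x y /\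
  continuity_2d_pt (fun a b => snd (F a b)) x y /\
  ex_Cderive (fun t => F t y) x /\ ex_Cderive (fun t => F x t) y.

Lemma smooth_onP Om F :
  smooth_on Om F <-> forall w x y, Om x y -> regular_at (Dw w F) x y.
Proof.
  unfold smooth_on, regular_at, ex_Cderive;
    split; intros H w x y Hxy; specialize (H w x y Hxy); tauto.
Qed.

Lemma smooth_on_regular_at Om F w x y :
  smooth_on Om F -> Om x y -> regular_at (Dw w F) x y.
Proof. intros HF; revert w x y; apply smooth_onP, HF. Qed.

Lemma regular_at_lin a b F G x y :
  regular_at F x y -> regular_at G x y -> regular_at (lin a F b G) x y.
Proof.
  intros (F1 & F2 & Fx & Fy) (G1 & G2 & Gx & Gy).
  split; [| split; [| split]]; try apply Cderive_lin; auto;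
    destruct a as [a1 a2], b as [b1 b2]; unfold lin; simpl;
    repeat first [ apply continuity_2d_pt_plus | apply continuity_2d_pt_opp
                 | apply continuity_2d_pt_mult | apply continuity_2d_pt_const
                 | assumption ].
Qed.

Lemma regular_at_ext_loc F G x y :
  locally_2d (fun u v => F u v = G u v) x y -> regular_at F x y -> regular_at G x y.
Proof.
  intros HFG (F1 & F2 & [Fx1 Fx2] & [Fy1 Fy2]).
  assert (Hx := locally_2d_1d_const_y _ _ _ HFG).
  assert (Hy := locally_2d_1d_const_x _ _ _ HFG).
  repeat split;
    [ eapply continuity_2d_pt_ext_loc; [| exact F1]
    | eapply continuity_2d_pt_ext_loc; [| exact F2]
    | eapply ex_derive_ext_loc; [| exact Fx1]
    | eapply ex_derive_ext_loc; [| exact Fx2]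
    | eapply ex_derive_ext_loc; [| exact Fy1]
    | eapply ex_derive_ext_loc; [| exact Fy2] ];
    [ eapply locally_2d_impl; [| exact HFG]; apply locally_2d_forall
    | eapply locally_2d_impl; [| exact HFG]; apply locally_2d_forall
    | eapply filter_imp; [| exact Hx] | eapply filter_imp; [| exact Hx]
    | eapply filter_imp; [| exact Hy] | eapply filter_imp; [| exact Hy] ];
    intros; congruence.
Qed.

Section Smooth.

Variable Om : R -> R -> Prop.
Hypothesis HO : open2 Om.

Lemma Dw_ext_on F G : (forall x y, Om x y -> F x y = G x y) ->
  forall w x y, Om x y -> Dw w F x y = Dw w G x y.
Proof.
  intros HFG w; induction w as [|[] w IH]; intros x y Hxy; cbn [Dw]; auto;
    [rewrite !dxE | rewrite !dyE]; apply Cderive_ext_loc;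
    [ apply (open2_locally_fst Om HO (fun u v => Dw w F u v = Dw w G u v))
    | apply (open2_locally_snd Om HO (fun u v => Dw w F u v = Dw w G u v)) ]; auto.
Qed.

Lemma Dw_lin a b F G : smooth_on Om F -> smooth_on Om G ->
  forall w x y, Om x y -> Dw w (lin a F b G) x y = lin a (Dw w F) b (Dw w G) x y.
Proof.
  intros HF HG w; induction w as [|[] w IH]; intros x y Hxy; [reflexivity | |];
    destruct (smooth_on_regular_at Om F w x y HF Hxy) as (_ & _ & Fx & Fy);
    destruct (smooth_on_regular_at Om G w x y HG Hxy) as (_ & _ & Gx & Gy);
    cbn [Dw]; [rewrite !dxE | rewrite !dyE].
  - rewrite (Cderive_ext_loc _ (fun t => lin a (Dw w F) b (Dw w G) t y));
      [ apply Cderive_lin; auto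
      | apply (open2_locally_fst Om HO
                 (fun u v => Dw w (lin a F b G) u v = lin a (Dw w F) b (Dw w G) u v)); auto ].
  - rewrite (Cderive_ext_loc _ (fun t => lin a (Dw w F) b (Dw w G) x t));
      [ apply Cderive_lin; auto
      | apply (open2_locally_snd Om HO
                 (fun u v => Dw w (lin a F b G) u v = lin a (Dw w F) b (Dw w G) u v)); auto ].
Qed.

Lemma smooth_lin a b F G : smooth_on Om F -> smooth_on Om G -> smooth_on Om (lin a F b G).
Proof.
  intros HF HG; apply smooth_onP; intros w x y Hxy.
  apply (regular_at_ext_loc (lin a (Dw w F) b (Dw w G))).
  - apply (open2_locally_2d Om HO (fun u v => _ = _)); auto.
    intros u v Huv; symmetry; apply Dw_lin; auto.
  - apply regular_at_lin; apply (smooth_on_regular_at Om); auto.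
Qed.

End Smooth.

(** * Local linear operators and Wirtinger derivatives *)

Record local_linear (Om : R -> R -> Prop) (T : Cfun -> Cfun) : Prop := {
  local_linear_smooth : forall F, smooth_on Om F -> smooth_on Om (T F);
  local_linear_ext : forall F G, (forall x y, Om x y -> F x y = G x y) ->
    forall x y, Om x y -> T F x y = T G x y;
  local_linear_lin : forall a b F G, smooth_on Om F -> smooth_on Om G ->
    forall x y, Om x y -> T (lin a F b G) x y = lin a (T F) b (T G) x y }.

Section LocalLinear.

Variable Om : R -> R -> Prop.
Hypothesis HO : open2 Om.

Lemma local_linear_Dw w : local_linear Om (Dw w).
Proof.
  split; intros; [apply smooth_Dw | apply (Dw_ext_on Om) | apply (Dw_lin Om)]; auto.
Qed.

Lemma local_linear_dx : local_linear Om dx.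
Proof. exact (local_linear_Dw (true :: nil)). Qed.

Lemma local_linear_dy : local_linear Om dy.
Proof. exact (local_linear_Dw (false :: nil)). Qed.

Lemma local_linear_comb c d T1 T2 : local_linear Om T1 -> local_linear Om T2 ->
  local_linear Om (fun F => lin c (T1 F) d (T2 F)).
Proof.
  intros [S1 E1 L1] [S2 E2 L2]; split.
  - intros F HF; apply (smooth_lin Om); auto.
  - intros F G HFG x y Hxy; unfold lin; rewrite (E1 F G), (E2 F G); auto.
  - intros a b F G HF HG x y Hxy; unfold lin at 1 2 3.
    rewrite (L1 a b F G), (L2 a b F G); auto; unfold lin; ring.
Qed.

Lemma local_linear_comp T1 T2 : local_linear Om T1 -> local_linear Om T2 ->
  local_linear Om (fun F => T1 (T2 F)).
Proof.
  intros [S1 E1 L1] [S2 E2 L2]; split; auto.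
  intros a b F G HF HG x y Hxy.
  rewrite (E1 _ (lin a (T2 F) b (T2 G))); auto.
Qed.

Lemma local_linear_iter T n : local_linear Om T -> local_linear Om (Nat.iter n T).
Proof.
  intros HT; induction n as [|n IH].
  - split; auto.
  - exact (local_linear_comp T (Nat.iter n T) HT IH).
Qed.

End LocalLinear.

Definition dop (a b : C) (F : Cfun) : Cfun := lin a (dx F) b (dy F).

Lemma local_linear_dop Om a b : open2 Om -> local_linear Om (dop a b).
Proof. intros HO; apply local_linear_comb; auto using local_linear_dx, local_linear_dy. Qed.

Lemma dx_dy_comm Om F : open2 Om -> smooth_on Om F ->
  forall x y, Om x y -> dx (dy F) x y = dy (dx F) x y.
Proof.
  intros HO HF x y Hxy.
  assert (R0 := fun u v => smooth_on_regular_at Om F nil u v HF).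
  assert (Rx := fun u v => smooth_on_regular_at Om F (true :: nil) u v HF).
  assert (Ry := fun u v => smooth_on_regular_at Om F (false :: nil) u v HF).
  destruct (smooth_on_regular_at Om F (true :: false :: nil) x y HF Hxy) as (Cxy1 & Cxy2 & _).
  destruct (smooth_on_regular_at Om F (false :: true :: nil) x y HF Hxy) as (Cyx1 & Cyx2 & _).
  unfold dx, dy; simpl; f_equal; apply Schwarz; auto;
    apply (open2_locally_2d Om HO (fun u v => _ /\ _)); auto; intros u v Huv;
    destruct (R0 u v Huv) as (_ & _ & [] & []), (Rx u v Huv) as (_ & _ & _ & []),
      (Ry u v Huv) as (_ & _ & [] & _); tauto.
Qed.

Lemma dop_dop Om a b c d F : open2 Om -> smooth_on Om F -> forall x y, Om x y ->
  dop a b (dop c d F) x y =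
  (a * c * dx (dx F) x y + (a * d + b * c) * dx (dy F) x y + b * d * dy (dy F) x y)%C.
Proof.
  intros HO HF x y Hxy.
  assert (Sx := smooth_Dw Om (true :: nil) F HF).
  assert (Sy := smooth_Dw Om (false :: nil) F HF).
  unfold dop; unfold lin at 1.
  rewrite (local_linear_lin _ _ (local_linear_dx Om HO)),
    (local_linear_lin _ _ (local_linear_dy Om HO)) by auto.
  unfold lin; rewrite <- (dx_dy_comm Om F) by auto; ring.
Qed.

(* Wop = 2i d/dz and Wbop = -2i d/dzbar for z = x + iy. *)
Definition Wop : Cfun -> Cfun := dop Ci 1.
Definition Wbop : Cfun -> Cfun := dop (- Ci) 1.

Lemma Wop_Wbop_laplacian Om F : open2 Om -> smooth_on Om F -> forall x y, Om x y ->
  Wop (Wbop F) x y = (dx (dx F) x y + dy (dy F) x y)%C.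
Proof.
  intros HO HF x y Hxy; unfold Wop, Wbop; rewrite (dop_dop Om) by auto.
  replace (Ci * - Ci)%C with (RtoC 1) by (apply injective_projections; simpl; ring).
  ring.
Qed.

Lemma Wbop_Wop_laplacian Om F : open2 Om -> smooth_on Om F -> forall x y, Om x y ->
  Wbop (Wop F) x y = (dx (dx F) x y + dy (dy F) x y)%C.
Proof.
  intros HO HF x y Hxy; unfold Wop, Wbop; rewrite (dop_dop Om) by auto.
  replace (- Ci * Ci)%C with (RtoC 1) by (apply injective_projections; simpl; ring).
  ring.
Qed.

Lemma dop_Wirtinger a b F x y :
  dop a b F x y = lin ((b - Ci * a) / 2) (Wop F) ((b + Ci * a) / 2) (Wbop F) x y.
Proof.
  unfold Wop, Wbop, dop, lin; destruct (dx F x y), (dy F x y), a, b.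
  apply injective_projections; simpl; field.
Qed.

Definition wirt (F : Cfun) (x0 : R * R) (p q : nat) : C :=
  Nat.iter p Wop (Nat.iter q Wbop F) (fst x0) (snd x0).

Section Wirtinger.

Variable Om : R -> R -> Prop.
Hypothesis HO : open2 Om.

Lemma local_linear_Wop : local_linear Om Wop.
Proof. exact (local_linear_dop Om _ _ HO). Qed.

Lemma local_linear_Wbop : local_linear Om Wbop.
Proof. exact (local_linear_dop Om _ _ HO). Qed.

Lemma local_linear_Wop_Wbop_iter p q :
  local_linear Om (fun F => Nat.iter p Wop (Nat.iter q Wbop F)).
Proof.
  apply local_linear_comp; apply local_linear_iter;
    [exact local_linear_Wop | exact local_linear_Wbop].
Qed.

Lemma iter_Wbop_Wop_comm q F : smooth_on Om F -> forall x y, Om x y ->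
  Nat.iter q Wbop (Wop F) x y = Wop (Nat.iter q Wbop F) x y.
Proof.
  intros HF; induction q as [|q IH]; intros x y Hxy; [reflexivity |].
  assert (Sq : smooth_on Om (Nat.iter q Wbop F))
    by (apply (local_linear_smooth _ _ (local_linear_iter Om Wbop q local_linear_Wbop)), HF).
  simpl; rewrite (local_linear_ext _ _ local_linear_Wbop _ (Wop (Nat.iter q Wbop F))) by auto.
  rewrite (Wbop_Wop_laplacian Om), (Wop_Wbop_laplacian Om); auto.
Qed.

Variable x0 : R * R.
Hypothesis Hx0 : Om (fst x0) (snd x0).

Lemma wirt_ext_on F G p q : (forall x y, Om x y -> F x y = G x y) ->
  wirt F x0 p q = wirt G x0 p q.
Proof. intros; apply (local_linear_ext _ _ (local_linear_Wop_Wbop_iter p q)); auto. Qed.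

Lemma wirt_lin a b F G p q : smooth_on Om F -> smooth_on Om G ->
  wirt (lin a F b G) x0 p q = (a * wirt F x0 p q + b * wirt G x0 p q)%C.
Proof. intros; apply (local_linear_lin _ _ (local_linear_Wop_Wbop_iter p q)); auto. Qed.

Lemma wirt_Wop F p q : smooth_on Om F -> wirt (Wop F) x0 p q = wirt F x0 (S p) q.
Proof.
  intros HF; unfold wirt; rewrite Nat.iter_succ_r.
  apply (local_linear_ext _ _ (local_linear_iter Om Wop p local_linear_Wop)); auto.
  intros; apply iter_Wbop_Wop_comm; auto.
Qed.

Lemma wirt_Wbop F p q : wirt (Wbop F) x0 p q = wirt F x0 p (S q).
Proof. unfold wirt; rewrite Nat.iter_succ_r; reflexivity. Qed.

Lemma wirt_dop a b F p q : smooth_on Om F ->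
  wirt (dop a b F) x0 p q =
  ((b - Ci * a) / 2 * wirt F x0 (S p) q + (b + Ci * a) / 2 * wirt F x0 p (S q))%C.
Proof.
  intros HF; rewrite (wirt_ext_on _ _ p q (fun x y _ => dop_Wirtinger a b F x y)).
  rewrite wirt_lin, wirt_Wop, wirt_Wbop; auto;
    apply local_linear_smooth; auto using local_linear_Wop, local_linear_Wbop.
Qed.

Lemma wirt_helmholtz lam u p q : smooth_on Om u -> helmholtz_on Om lam u ->
  wirt u x0 (S p) (S q) = (RtoC (- lam) * wirt u x0 p q)%C.
Proof.
  intros Hu Hhelm.
  rewrite <- wirt_Wbop, <- wirt_Wop by (apply local_linear_smooth; auto using local_linear_Wbop).
  rewrite (wirt_ext_on _ (lin (RtoC (- lam)) u 0 u)), wirt_lin; auto; [ring |].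
  intros x y Hxy; rewrite (Wop_Wbop_laplacian Om), Hhelm by auto; unfold lin; ring.
Qed.

Lemma wirt_Dw_vanish F : smooth_on Om F -> (forall p q, wirt F x0 p q = 0) ->
  forall w p q, wirt (Dw w F) x0 p q = 0.
Proof.
  intros HF Hz w; induction w as [|b w IH]; intros p q; [apply Hz |].
  assert (Sw := smooth_Dw Om w F HF).
  rewrite (wirt_ext_on _ (if b then dop 1 0 (Dw w F) else dop 0 1 (Dw w F))).
  - destruct b; rewrite wirt_dop, !IH by auto; ring.
  - intros x y _; destruct b; cbn [Dw]; unfold dop, lin; ring.
Qed.

End Wirtinger.

(** * Directional derivatives along a segment *)

Lemma differentiable_pt_lim_partials (f : R -> R -> R) x y :
  locally_2d (fun u v => ex_derive (fun z => f z v) u) x y ->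
  ex_derive (fun z => f x z) y ->
  continuity_2d_pt (fun u v => Derive (fun z => f z v) u) x y ->
  differentiable_pt_lim f x y (Derive (fun z => f z y) x) (Derive (fun z => f x z) y).
Proof.
  intros Hx Hy Hc; apply filterdiff_differentiable_pt_lim.
  eapply filterdiff_ext_lin.
  - apply (is_derive_filterdiff f x y (fun u v => Derive (fun z => f z v) u)).
    + apply (locally_2d_locally
               (fun u v => is_derive (fun z => f z v) u (Derive (fun z => f z v) u))).
      eapply locally_2d_impl; [| exact Hx]; apply locally_2d_forall.
      intros u v; apply Derive_correct.
    + apply Derive_correct, Hy.
    + apply (continuity_2d_pt_filterlim (fun u v => Derive (fun z => f z v) u)), Hc.
  - intros [a b]; reflexivity.
Qed.

Lemma is_derive_along_line (f : R -> R -> R) (x0 e : R * R) t :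
  locally_2d (fun u v => ex_derive (fun z => f z v) u)
    (fst x0 + t * fst e) (snd x0 + t * snd e) ->
  ex_derive (fun z => f (fst x0 + t * fst e) z) (snd x0 + t * snd e) ->
  continuity_2d_pt (fun u v => Derive (fun z => f z v) u)
    (fst x0 + t * fst e) (snd x0 + t * snd e) ->
  is_derive (fun s => f (fst x0 + s * fst e) (snd x0 + s * snd e)) t
    (fst e * Derive (fun z => f z (snd x0 + t * snd e)) (fst x0 + t * fst e)
     + snd e * Derive (fun z => f (fst x0 + t * fst e) z) (snd x0 + t * snd e)).
Proof.
  intros Hx Hy Hc; apply is_derive_Reals.
  rewrite (Rmult_comm (fst e)), (Rmult_comm (snd e)).
  apply (derivable_pt_lim_comp_2d f);
    [ apply differentiable_pt_lim_partials; auto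
    | apply is_derive_Reals; auto_derive; auto; ring
    | apply is_derive_Reals; auto_derive; auto; ring ].
Qed.

Lemma Cderive_along_line Om F (x0 e : R * R) t : open2 Om -> smooth_on Om F ->
  Om (fst x0 + t * fst e) (snd x0 + t * snd e) ->
  ex_Cderive (fun s => F (fst x0 + s * fst e) (snd x0 + s * snd e)) t /\
  Cderive (fun s => F (fst x0 + s * fst e) (snd x0 + s * snd e)) t =
    ddir e F (fst x0 + t * fst e) (snd x0 + t * snd e).
Proof.
  intros HO HF Ht.
  assert (Hreg := open2_locally_2d Om HO (regular_at F) _ _
                    (fun u v => smooth_on_regular_at Om F nil u v HF) Ht).
  destruct (smooth_on_regular_at Om F nil _ _ HF Ht) as (_ & _ & _ & [Fy1 Fy2]).
  destruct (smooth_on_regular_at Om F (true :: nil) _ _ HF Ht) as (Cx1 & Cx2 & _).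
  assert (Hx1 : locally_2d (fun u v => ex_derive (fun z => fst (F z v)) u) _ _)
    by (eapply locally_2d_impl; [| exact Hreg]; apply locally_2d_forall; now intros u v (_ & _ & [] & _)).
  assert (Hx2 : locally_2d (fun u v => ex_derive (fun z => snd (F z v)) u) _ _)
    by (eapply locally_2d_impl; [| exact Hreg]; apply locally_2d_forall; now intros u v (_ & _ & [] & _)).
  assert (D1 := is_derive_along_line (fun a b => fst (F a b)) x0 e t Hx1 Fy1 Cx1).
  assert (D2 := is_derive_along_line (fun a b => snd (F a b)) x0 e t Hx2 Fy2 Cx2).
  split; [split; eexists; eassumption |].
  apply is_derive_unique in D1, D2.
  unfold Cderive; apply injective_projections; cbn [fst snd];
    [etransitivity; [exact D1 |] | etransitivity; [exact D2 |]];
    unfold ddir, dx, dy; simpl; ring.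
Qed.

Lemma continuous_vanish_right (g : R -> R) h : 0 < h -> continuous g 0 ->
  (forall t, 0 < t < h -> g t = 0) -> g 0 = 0.
Proof.
  intros Hh Hc Hz.
  apply (filterlim_locally_unique (F := at_right 0) g).
  - eapply filterlim_filter_le_1; [apply filter_le_within | exact Hc].
  - apply (filterlim_ext_loc (fun _ => 0)); [| apply filterlim_const].
    apply (locally_interval _ 0 m_infty h); simpl; auto.
    intros t _ Hth Ht; symmetry; apply Hz; lra.
Qed.

Lemma ex_Cderive_vanish_right (f : R -> C) h : 0 < h -> ex_Cderive f 0 ->
  (forall t, 0 < t < h -> f t = 0) -> f 0 = 0.
Proof.
  intros Hh [D1 D2] Hz.
  apply injective_projections;
    [ apply (continuous_vanish_right (fun t => fst (f t)) h Hh (ex_derive_continuous _ _ D1))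
    | apply (continuous_vanish_right (fun t => snd (f t)) h Hh (ex_derive_continuous _ _ D2)) ];
    intros t Ht; cbv beta; rewrite Hz; auto.
Qed.

Lemma local_linear_ddir Om e : open2 Om -> local_linear Om (ddir e).
Proof. exact (local_linear_dop Om (fst e) (snd e)). Qed.

Lemma iter_ddir_vanish_on_segment Om G (x0 e : R * R) h :
  open2 Om -> smooth_on Om G -> 0 < h ->
  (forall t, 0 <= t <= h -> Om (fst x0 + t * fst e) (snd x0 + t * snd e)) ->
  (forall t, 0 <= t <= h -> G (fst x0 + t * fst e) (snd x0 + t * snd e) = 0) ->
  forall j, Nat.iter j (ddir e) G (fst x0) (snd x0) = 0.
Proof.
  intros HO HG Hh Hseg Hz.
  assert (Sj : forall j, smooth_on Om (Nat.iter j (ddir e) G))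
    by (intros j; apply (local_linear_iter Om _ j (local_linear_ddir Om e HO)), HG).
  assert (Hinner : forall j t, 0 < t < h ->
            Nat.iter j (ddir e) G (fst x0 + t * fst e) (snd x0 + t * snd e) = 0).
  { intros j; induction j as [|j IH]; intros t Ht; [apply Hz; lra |].
    rewrite Nat.iter_succ.
    destruct (Cderive_along_line Om _ x0 e t HO (Sj j) (Hseg t ltac:(lra))) as [_ <-].
    rewrite (Cderive_ext_loc _ (fun _ => RtoC 0)).
    - unfold Cderive; simpl; rewrite Derive_const; reflexivity.
    - apply (locally_interval _ t 0 h); simpl; try lra.
      intros s Hs0 Hsh; apply IH; lra. }
  intros j.
  replace (fst x0) with (fst x0 + 0 * fst e) by ring.
  replace (snd x0) with (snd x0 + 0 * snd e) by ring.
  apply (ex_Cderive_vanish_right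
           (fun s => Nat.iter j (ddir e) G (fst x0 + s * fst e) (snd x0 + s * snd e)) h);
    auto.
  apply (Cderive_along_line Om); auto; apply Hseg; lra.
Qed.

(** * Trigonometry of the two lines *)

Lemma Cmult_eq_0_reg_l (d z : C) : d <> 0 -> (d * z)%C = 0 -> z = 0.
Proof.
  intros Hd H; replace z with (d * z / d)%C by (field; exact Hd).
  rewrite H; unfold Cdiv; ring.
Qed.

Lemma cramer2_trivial (c11 c12 c21 c22 X Y : C) : (c11 * c22 - c12 * c21)%C <> 0 ->
  (c11 * X + c12 * Y)%C = 0 -> (c21 * X + c22 * Y)%C = 0 -> X = 0 /\ Y = 0.
Proof.
  intros HD E1 E2; split; apply (Cmult_eq_0_reg_l _ _ HD).
  - transitivity (c22 * (c11 * X + c12 * Y) - c12 * (c21 * X + c22 * Y))%C;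
      [ring | rewrite E1, E2; ring].
  - transitivity (c11 * (c21 * X + c22 * Y) - c21 * (c11 * X + c12 * Y))%C;
      [ring | rewrite E1, E2; ring].
Qed.

Definition cis (a : R) : C := (cos a, sin a).

Lemma cis_mul a b : (cis a * cis b)%C = cis (a + b).
Proof. unfold cis, Cmult; simpl; rewrite cos_plus, sin_plus; f_equal; ring. Qed.

Lemma cis_pow a n : (cis a ^ n)%C = cis (INR n * a).
Proof.
  induction n as [|n IH].
  - unfold cis; simpl; rewrite Rmult_0_l, cos_0, sin_0; reflexivity.
  - rewrite Cpow_S, IH, cis_mul, S_INR; f_equal; ring.
Qed.

Lemma cis_det a b : (cis a * cis (- b) - cis (- a) * cis b)%C = (0, 2 * sin (a - b)).
Proof.
  unfold cis; apply injective_projections; simpl;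
    rewrite ?cos_neg, ?sin_neg, ?sin_minus; ring.
Qed.

Lemma cis_system_trivial (a b : R) (X Y : C) : sin (b - a) <> 0 ->
  (cis a * X + cis (- a) * Y)%C = 0 -> (cis b * X + cis (- b) * Y)%C = 0 ->
  X = 0 /\ Y = 0.
Proof.
  intros Hs; apply cramer2_trivial; rewrite cis_det.
  replace (b - a) with (- (a - b)) in Hs by ring; rewrite sin_neg in Hs.
  intros E; injection E; lra.
Qed.

Lemma sin_irrational_multiple_PI (al : R) (n : nat) : irrational al -> (0 < n)%nat ->
  sin (INR n * al * PI) <> 0.
Proof.
  intros Hirr Hn Hs; apply sin_eq_0_0 in Hs as [k Hk].
  apply Hirr; exists k, (Z.of_nat n); split; [lia |].
  assert (HPI := PI_RGT_0); assert (HnR : 0 < INR n) by (apply lt_0_INR; lia).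
  assert (Hk' : IZR k = INR n * al) by (apply (Rmult_eq_reg_r PI); lra).
  rewrite <- INR_IZR_INZ, Hk'; field; lra.
Qed.

Lemma dop_direction_coef_cis phi :
  ((sin phi - Ci * cos phi) / 2 = - Ci / 2 * cis phi)%C /\
  ((sin phi + Ci * cos phi) / 2 = Ci / 2 * cis (- phi))%C.
Proof.
  unfold cis; rewrite cos_neg, sin_neg;
    split; apply injective_projections; simpl; field.
Qed.

Lemma dop_normal_coef_cis n1 n2 phi : n1 ^ 2 + n2 ^ 2 = 1 -> n1 * cos phi + n2 * sin phi = 0 ->
  exists s : R, s <> 0 /\
    ((n2 - Ci * n1) / 2 = s * cis phi)%C /\ ((n2 + Ci * n1) / 2 = s * cis (- phi))%C.
Proof.
  intros Hn Hperp; set (s := n2 * cos phi - n1 * sin phi).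
  assert (Hsc := sin2_cos2 phi); unfold Rsqr in Hsc.
  assert (E1 : n1 = - s * sin phi).
  { assert (I : n1 + s * sin phi = cos phi * (n1 * cos phi + n2 * sin phi)
                                   + n1 * (1 - (sin phi * sin phi + cos phi * cos phi)))
      by (unfold s; ring).
    rewrite Hperp, Hsc in I; lra. }
  assert (E2 : n2 = s * cos phi).
  { assert (I : n2 - s * cos phi = sin phi * (n1 * cos phi + n2 * sin phi)
                                   + n2 * (1 - (sin phi * sin phi + cos phi * cos phi)))
      by (unfold s; ring).
    rewrite Hperp, Hsc in I; lra. }
  exists (s / 2); split; [intros Z; rewrite E1, E2 in Hn; nra |].
  unfold cis; rewrite cos_neg, sin_neg, E1, E2;
    split; apply injective_projections; simpl; field.
Qed.

(** * Vanishing order at the vertex *)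

Lemma pure_recurrence (K : nat -> nat -> nat -> C) (al be A B : C) (M : nat) :
  (forall j p q, K (S j) p q = al * K j (S p) q + be * K j p (S q))%C ->
  (forall p q, (p + q = M)%nat ->
     K O p q = ((if q =? 0 then A else 0) + (if p =? 0 then B else 0))%C) ->
  forall j p q, (p + q + j = M)%nat ->
    K j p q = ((if q =? 0 then al ^ j * A else 0) + (if p =? 0 then be ^ j * B else 0))%C.
Proof.
  intros Hrec H0 j; induction j as [|j IH]; intros p q Hpq.
  - rewrite H0 by lia; destruct (q =? 0), (p =? 0); simpl; ring.
  - rewrite Hrec, !IH, !Cpow_S by lia; cbn [Nat.eqb];
      destruct (q =? 0), (p =? 0); ring.
Qed.

Lemma wirt_robin_pure Om u x0 nu eta M :
  open2 Om -> smooth_on Om u -> Om (fst x0) (snd x0) ->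
  (forall p q, (p + q <= M)%nat -> wirt u x0 p q = 0) ->
  (forall p q, (p + q = S M)%nat -> p <> O -> q <> O -> wirt u x0 p q = 0) ->
  forall p q, (p + q = M)%nat ->
  wirt (lin 1 (ddir nu u) eta u) x0 p q =
    ((if q =? 0 then (snd nu - Ci * fst nu) / 2 * wirt u x0 (S M) 0 else 0) +
     (if p =? 0 then (snd nu + Ci * fst nu) / 2 * wirt u x0 0 (S M) else 0))%C.
Proof.
  intros HO Hu Hx0 Hlow Hmix p q Hpq; subst M.
  assert (Snu : smooth_on Om (ddir nu u)) by apply (local_linear_ddir Om nu HO), Hu.
  rewrite (wirt_lin Om HO x0 Hx0 1 eta (ddir nu u) u p q Snu Hu).
  change (ddir nu u) with (dop (fst nu) (snd nu) u).
  rewrite (wirt_dop Om HO x0 Hx0 (fst nu) (snd nu) u p q Hu), (Hlow p q (le_n _)).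
  destruct p as [|p], q as [|q]; cbn [Nat.eqb].
  - simpl; ring.
  - rewrite (Hmix 1%nat (S q)) by lia; simpl; ring.
  - rewrite (Hmix (S p) 1%nat) by lia; rewrite Nat.add_0_r; ring.
  - rewrite (Hmix (S (S p)) (S q)), (Hmix (S p) (S (S q))) by lia; ring.
Qed.

Lemma singular_line_relation Om u x0 phi h eta M :
  open2 Om -> smooth_on Om u -> Om (fst x0) (snd x0) -> 0 < h ->
  (forall p, on_segment x0 (cos phi, sin phi) h p -> Om (fst p) (snd p)) ->
  gen_singular_line u x0 (cos phi, sin phi) h eta ->
  (forall p q, (p + q <= M)%nat -> wirt u x0 p q = 0) ->
  (forall p q, (p + q = S M)%nat -> p <> O -> q <> O -> wirt u x0 p q = 0) ->
  (cis (INR (S M) * phi) * ((- Ci / 2) ^ M * wirt u x0 (S M) 0)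
   + cis (- (INR (S M) * phi)) * ((Ci / 2) ^ M * wirt u x0 0 (S M)))%C = 0.
Proof.
  intros HO Hu Hx0 Hh Hseg [nu [Hnu [Hperp Hline]]] Hlow Hmix.
  set (e := (cos phi, sin phi)) in *.
  set (G := lin 1 (ddir nu u) eta u).
  assert (SG : smooth_on Om G)
    by (apply smooth_lin; auto; apply (local_linear_ddir Om nu HO), Hu).
  assert (Htop : wirt (Nat.iter M (ddir e) G) x0 0 0 = 0).
  { apply (iter_ddir_vanish_on_segment Om G x0 e h); auto; intros t Ht.
    - apply (Hseg (fst x0 + t * fst e, snd x0 + t * snd e)); exists t; auto.
    - unfold G, lin; rewrite Cmult_1_l.
      apply (Hline (fst x0 + t * fst e, snd x0 + t * snd e)); exists t; auto. }
  destruct (dop_normal_coef_cis (fst nu) (snd nu) phi Hnu Hperp) as [s [Hs [An Bn]]].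
  destruct (dop_direction_coef_cis phi) as [Ae Be].
  rewrite (pure_recurrence (fun j p q => wirt (Nat.iter j (ddir e) G) x0 p q)
             ((sin phi - Ci * cos phi) / 2) ((sin phi + Ci * cos phi) / 2)
             ((snd nu - Ci * fst nu) / 2 * wirt u x0 (S M) 0)
             ((snd nu + Ci * fst nu) / 2 * wirt u x0 0 (S M)) M) in Htop;
    [| | | lia].
  - cbn [Nat.eqb] in Htop; rewrite Ae, Be, An, Bn, !Cpow_mult_l in Htop.
    apply (Cmult_eq_0_reg_l s); [intros E; injection E; auto |].
    rewrite <- Htop, <- !cis_pow, Ropp_mult_distr_r, <- cis_pow, !Cpow_S; ring.
  - intros j p q; rewrite Nat.iter_succ.
    exact (wirt_dop Om HO x0 Hx0 (fst e) (snd e) _ p q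
             (local_linear_smooth _ _ (local_linear_iter Om _ j (local_linear_ddir Om e HO)) G SG)).
  - intros p q Hpq; apply (wirt_robin_pure Om); auto.
Qed.

Lemma wirt_vanish Om lam u x0 h alpha theta C1 C2 :
  open2 Om -> smooth_on Om u -> helmholtz_on Om lam u ->
  Om (fst x0) (snd x0) -> 0 < h -> irrational alpha ->
  (forall p, on_segment x0 (cos theta, sin theta) h p -> Om (fst p) (snd p)) ->
  (forall p, on_segment x0 (cos (theta + alpha * PI), sin (theta + alpha * PI)) h p ->
     Om (fst p) (snd p)) ->
  gen_singular_line u x0 (cos theta, sin theta) h C1 ->
  gen_singular_line u x0 (cos (theta + alpha * PI), sin (theta + alpha * PI)) h C2 ->
  u (fst x0) (snd x0) = 0 -> forall p q, wirt u x0 p q = 0.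
Proof.
  intros HO Hu Hhelm Hx0 Hh Hirr Hseg1 Hseg2 Hl1 Hl2 Hu0.
  enough (Hall : forall N p q, (p + q <= N)%nat -> wirt u x0 p q = 0)
    by (intros p q; exact (Hall _ p q (le_n _))).
  intros N; induction N as [|M Hlow]; intros p q Hpq.
  { replace p with 0%nat by lia; replace q with 0%nat by lia; exact Hu0. }
  assert (Hmix : forall p q, (p + q = S M)%nat -> p <> O -> q <> O -> wirt u x0 p q = 0).
  { intros [|p'] [|q'] H1 H2 H3; try congruence.
    rewrite (wirt_helmholtz Om HO x0 Hx0 lam u p' q' Hu Hhelm), Hlow by lia; ring. }
  assert (Hsin : sin (INR (S M) * (theta + alpha * PI) - INR (S M) * theta) <> 0).
  { replace (_ - _) with (INR (S M) * alpha * PI) by ring.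
    apply sin_irrational_multiple_PI; auto; lia. }
  destruct (cis_system_trivial _ _ _ _ Hsin
              (singular_line_relation Om u x0 theta h C1 M HO Hu Hx0 Hh Hseg1 Hl1 Hlow Hmix)
              (singular_line_relation Om u x0 _ h C2 M HO Hu Hx0 Hh Hseg2 Hl2 Hlow Hmix))
    as [HA HB].
  assert (Hm : (- Ci / 2)%C <> 0)
    by (intros E; apply (f_equal snd) in E; simpl in E; field_simplify in E; lra).
  assert (Hp : (Ci / 2)%C <> 0)
    by (intros E; apply (f_equal snd) in E; simpl in E; field_simplify in E; lra).
  destruct (Nat.eq_dec (p + q) (S M)) as [Htop | Hne]; [| apply Hlow; lia].
  destruct p as [|p].
  - simpl in Htop; subst q; exact (Cmult_eq_0_reg_l _ _ (Cpow_nz _ M Hp) HB).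
  - destruct q as [|q]; [| apply Hmix; auto].
    rewrite Nat.add_0_r in Htop; rewrite Htop.
    exact (Cmult_eq_0_reg_l _ _ (Cpow_nz _ M Hm) HA).
Qed.

Lemma taylor_hom_0 u x0 z1 z2 : taylor_hom u x0 0 z1 z2 = u (fst x0) (snd x0).
Proof.
  unfold taylor_hom; rewrite sum_O; simpl.
  replace (/ (1 * 1) * 1 * 1) with 1 by field; apply Cmult_1_l.
Qed.

Lemma taylor_hom_vanish u x0 n z1 z2 :
  (forall w, Dw w u (fst x0) (snd x0) = 0) -> taylor_hom u x0 n z1 z2 = 0.
Proof.
  intros Hz; unfold taylor_hom.
  rewrite (sum_n_ext _ (fun _ => zero)) by (intros k; rewrite Hz; apply Cmult_0_r).
  induction n as [|n IH]; [apply sum_O | rewrite sum_Sn, IH; apply plus_zero_r].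
Qed.

Theorem theorem4p1
  (Om : R -> R -> Prop) (lam : R) (u : Cfun)
  (x0 : R * R) (h alpha theta : R) (C1 C2 : C) :
  open2 Om -> 0 < lam ->
  smooth_on Om u -> helmholtz_on Om lam u ->
  Om (fst x0) (snd x0) -> 0 < h ->
  0 < alpha < 2 -> irrational alpha ->
  let em := (cos theta, sin theta) in
  let ep := (cos (theta + alpha * PI), sin (theta + alpha * PI)) in
  (forall p, on_segment x0 em h p -> Om (fst p) (snd p)) ->
  (forall p, on_segment x0 ep h p -> Om (fst p) (snd p)) ->
  C1 <> RtoC 0 -> C2 <> RtoC 0 ->
  gen_singular_line u x0 em h C1 ->
  gen_singular_line u x0 ep h C2 ->
  (u (fst x0) (snd x0) <> RtoC 0 -> Vani_is u x0 (Some 0%nat)) /\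
  (u (fst x0) (snd x0) = RtoC 0 -> Vani_is u x0 None).
Proof.
  (* The signs of lam, C1, C2 and the range of alpha are irrelevant: the Helmholtz and
     Robin terms only ever involve coefficients of lower order. *)
  intros HO _ Hu Hhelm Hx0 Hh _ Hirr em ep Hseg1 Hseg2 _ _ Hl1 Hl2.
  split.
  - intros Hu0; split; [| intros m Hm; lia].
    exists 0, 0; rewrite taylor_hom_0; exact Hu0.
  - intros Hu0 m [z1 [z2 Hnz]]; apply Hnz, taylor_hom_vanish; intros w.
    change (wirt (Dw w u) x0 0 0 = 0).
    apply (wirt_Dw_vanish Om HO x0 Hx0 u Hu); intros p q.
    apply (wirt_vanish Om lam u x0 h alpha theta C1 C2); auto.
Qed.
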